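(* For any flats $A,B,C$ in a proaffine regular liner $X$: if $A$ is subparallel to $B$ and $B$ is subparallel to $C$, then $A$ is subparallel to $C$; and if $A\parallel B$ and $B\parallel C$, then $A\parallel C$.
   Context: A liner is a set $X$ of points with a family of subsets called lines such that any two distinct points lie in a unique line and every line contains at least two points. For distinct $x,y$, $\overline{xy}$ is the line through them and $\overline{xx}:=\{x\}$. A set is flat if it contains $\overline{xy}$ for all its distinct points; $\overline A$ is the smallest flat containing $A$. For $A\subseteq X$, $y\in X$ put $\overline{Ay}=\bigcup_{a\in A}\overline{ay}$. $X$ is proaffine if for all $o,x,y\in X$ and $p\in\overline{xy}\setminus\overline{ox}$ there exists $u\in\overline{oy}$ such that $\overline{vp}\cap\overline{ox}\ne\varnothing$ for every $v\in\overline{oy}\setminus\{u\}$. $X$ is regular if for every flat $A$ and points $a\in A$, $b\in X\setminus A$, $\overline{A\cup\{b\}}=\bigcup_{y\in\overline{ab}}\overline{Ay}$. A flat $A$ is subparallel to a flat $B$ if $A\subseteq\overline{\{a\}\cup B}$ for every $a\in A$; flats $A,B$ are parallel, $A\parallel B$, if $A$ is subparallel to $B$ and $B$ is subparallel to $A$. *)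

From Stdlib Require Import Classical.

Record liner := Liner {
  point :> Type;
  is_line : (point -> Prop) -> Prop;
  line_two_points : forall L, is_line L -> exists x y, x <> y /\ L x /\ L y;
  line_exists : forall x y : point, x <> y -> exists L, is_line L /\ L x /\ L y;
  line_unique : forall (x y : point) L M, x <> y ->
      is_line L -> L x -> L y -> is_line M -> M x -> M y ->
      forall z, L z <-> M z
}.

Section LinerDefs.
Variable X : liner.

Definition line_through (x y : X) : X -> Prop :=
  fun z => (x = y /\ z = x) \/
           (x <> y /\ exists L, is_line X L /\ L x /\ L y /\ L z).

Definition subset (A B : X -> Prop) : Prop := forall z, A z -> B z.

Definition flat (A : X -> Prop) : Prop :=
  forall x y, A x -> A y -> x <> y -> subset (line_through x y) A.

Definition hull (A : X -> Prop) : X -> Prop :=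
  fun z => forall F, flat F -> subset A F -> F z.

Definition cone (A : X -> Prop) (y : X) : X -> Prop :=
  fun z => exists a, A a /\ line_through a y z.

Definition proaffine : Prop :=
  forall o x y p : X, line_through x y p -> ~ line_through o x p ->
    exists u, line_through o y u /\
      forall v, line_through o y v -> v <> u ->
        exists w, line_through v p w /\ line_through o x w.

Definition regular : Prop :=
  forall (A : X -> Prop) (a b : X), flat A -> A a -> ~ A b ->
    forall z, hull (fun t => A t \/ t = b) z <->
              exists y, line_through a b y /\ cone A y z.

Definition subparallel (A B : X -> Prop) : Prop :=
  forall a, A a -> subset A (hull (fun t => t = a \/ B t)).

Definition parallel (A B : X -> Prop) : Prop :=
  subparallel A B /\ subparallel B A.

End LinerDefs.

(* It suffices to show that [A] lies in every flat [C] that [B] is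
   subparallel to and that meets [A] in a point [a]: for general [C] apply
   this to the hull of [a] and [C].  In the main case ([a] not in [B], [B]
   disjoint from [A] and [C], [b] in [B]) regularity writes a point [x] of
   [A] as [x] on a line [b1 y0] with [b1] in [B] and [y0] on [ab], and then
   [b1] on a line [c1 z] with [c1] in [C] and [z] on [ab].  Proaffinity in
   the triangle [a x y0] with [p = b1] says that at most one point of [ab]
   is joined to [b1] by a line missing [ax]; [b] is such a point, so the
   line [z b1] meets [ax] in some [w], which lies in [A].  Proaffinity
   again, at [b1] with [p = a], says at most one point of the line [b1 z] is
   joined to [a] by a line missing [b1 b]; both [w] and [c1] are, so
   [w = c1] lies in [C] and on [ax], whence [x] lies in [C]. *)

From Stdlib Require Import Classical.

Section Liner.
Variable X : liner.
Notation col := (line_through X).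

Lemma line_through_l (p q : X) : col p q p.
Proof.
  destruct (classic (p = q)) as [E|E]; [left; auto|].
  right; split; [exact E|].
  destruct (line_exists X p q E) as [L [HL [Hp Hq]]]; exists L; auto.
Qed.

Lemma line_through_r (p q : X) : col p q q.
Proof.
  destruct (classic (p = q)) as [E|E]; [left; auto|].
  right; split; [exact E|].
  destruct (line_exists X p q E) as [L [HL [Hp Hq]]]; exists L; auto.
Qed.

Lemma line_through_sym (p q z : X) : col p q z -> col q p z.
Proof.
  intros [[E Hz]|[Hpq [L [HL [Hp [Hq Hz]]]]]].
  - subst; left; auto.
  - right; split; [congruence|]; exists L; auto.
Qed.

Lemma line_through_same (p z : X) : col p p z -> z = p.
Proof. intros [[_ Hz]|[Hpp _]]; [exact Hz|contradiction]. Qed.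

Lemma line_through_eq (p q r s : X) : r <> s -> col p q r -> col p q s ->
  forall z, col r s z <-> col p q z.
Proof.
  intros Hrs Hr Hs z.
  destruct Hr as [[Hpq Hr]|[Hpq [L [HL [Lp [Lq Lr]]]]]].
  { subst. destruct Hs as [[_ Hs]|[Hn _]]; [subst; tauto|tauto]. }
  destruct Hs as [[Hpq' _]|[_ [M [HM [Mp [Mq Ms]]]]]]; [tauto|].
  assert (Ls : L s) by (apply (line_unique X p q L M); auto).
  split.
  - intros [[E _]|[_ [N [HN [Nr [Ns Nz]]]]]]; [tauto|].
    assert (L z) by (apply (line_unique X r s L N); auto).
    right; split; [exact Hpq|]; exists L; auto.
  - intros [[E _]|[_ [N [HN [Np [Nq Nz]]]]]]; [tauto|].
    assert (L z) by (apply (line_unique X p q L N); auto).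
    right; split; [exact Hrs|]; exists L; auto.
Qed.

Lemma line_through_exchange (p q r : X) : p <> r -> col p q r -> col p r q.
Proof.
  intros Hpr Hr.
  apply (line_through_eq p q p r Hpr (line_through_l p q) Hr), line_through_r.
Qed.

Lemma flat_line_through (F : X -> Prop) (p q z : X) :
  flat X F -> F p -> F q -> col p q z -> F z.
Proof.
  intros HF Hp Hq Hz. destruct (classic (p = q)) as [E|E].
  - subst. rewrite (line_through_same q z Hz). exact Hq.
  - exact (HF p q Hp Hq E z Hz).
Qed.

Lemma flat_point (a : X) : flat X (fun t => t = a).
Proof. intros x y Hx Hy Hne. subst. contradiction. Qed.

Lemma flat_hull (S : X -> Prop) : flat X (hull X S).
Proof.
  intros x y Hx Hy Hne z Hz F HF HSF.
  apply (HF x y); [apply Hx|apply Hy|..]; auto.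
Qed.

Lemma subset_hull (S : X -> Prop) : subset X S (hull X S).
Proof. intros z Hz F _ HSF. exact (HSF z Hz). Qed.

Lemma hull_min (S F : X -> Prop) : flat X F -> subset X S F -> subset X (hull X S) F.
Proof. intros HF HSF z Hz. exact (Hz F HF HSF). Qed.

Lemma hull_mono (S T : X -> Prop) : subset X S T -> subset X (hull X S) (hull X T).
Proof. intros HST z Hz F HF HTF. apply Hz; [exact HF|]. intros t Ht; exact (HTF t (HST t Ht)). Qed.

Lemma subparallel_subset (A B : X -> Prop) (a : X) :
  flat X B -> subparallel X A B -> A a -> B a -> subset X A B.
Proof.
  intros FB SAB Aa Ba x Ax.
  apply (hull_min (fun t => t = a \/ B t) B FB); [intros t [->|Bt]; auto|exact (SAB a Aa x Ax)].
Qed.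

Lemma regular_hull_add_point (F : X -> Prop) (f p z : X) :
  regular X -> flat X F -> F f -> ~ F p -> hull X (fun t => t = p \/ F t) z ->
  exists y c, col f p y /\ F c /\ col c y z.
Proof.
  intros Hreg HF Ff nFp Hz.
  assert (Hz' : hull X (fun t => F t \/ t = p) z)
    by (apply (hull_mono (fun t => t = p \/ F t)); [intros t; tauto|exact Hz]).
  destruct (proj1 (Hreg F f p HF Ff nFp z) Hz') as [y [Hy [c [Fc Hc]]]].
  exists y, c; auto.
Qed.

Definition lines_meet (p q r s : X) : Prop := exists w, col p q w /\ col r s w.

Lemma lines_meet_flats_meet (F G : X -> Prop) (p q r s : X) :
  flat X F -> flat X G -> F p -> F q -> G r -> G s -> lines_meet p q r s ->
  exists w, F w /\ G w.
Proof.
  intros HF HG Fp Fq Gr Gs [w [Hw1 Hw2]].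
  exists w; split; [exact (flat_line_through F p q w HF Fp Fq Hw1)
                   |exact (flat_line_through G r s w HG Gr Gs Hw2)].
Qed.

Lemma proaffine_unique_nonmeeting (o x y p v1 v2 : X) :
  proaffine X -> col x y p -> ~ col o x p -> col o y v1 -> col o y v2 ->
  ~ lines_meet v1 p o x -> ~ lines_meet v2 p o x -> v1 = v2.
Proof.
  intros Hpa Hp Hnp H1 H2 N1 N2.
  destruct (Hpa o x y p Hp Hnp) as [u [_ Hu]].
  assert (Eu : forall v, col o y v -> ~ lines_meet v p o x -> v = u)
    by (intros v Hv Nv; apply NNPP; intro Hvu; exact (Nv (Hu v Hv Hvu))).
  rewrite (Eu v1 H1 N1), (Eu v2 H2 N2); reflexivity.
Qed.

End Liner.

Section GeneralPosition.
Variables (X : liner) (A B C : X -> Prop) (a b x : X).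
Notation col := (line_through X).
Hypotheses (Hpa : proaffine X) (FA : flat X A) (FB : flat X B) (FC : flat X C).
Hypotheses (Aa : A a) (Ca : C a) (Bb : B b) (Ax : A x) (xa : x <> a) (nBa : ~ B a).
Hypotheses (AB : forall t, A t -> B t -> False) (BC : forall t, B t -> C t -> False).

Lemma line_to_ab_meets_ax (y0 b1 : X) : col a b y0 -> B b1 -> col b1 y0 x ->
  forall z, col a b z -> z <> b -> lines_meet X z b1 a x.
Proof.
  intros Hy0 Bb1 Hx z Hz zb.
  assert (y0a : y0 <> a).
  { intro E; subst y0. apply (AB b1); [|exact Bb1].
    apply (flat_line_through X A a x b1 FA Aa Ax).
    exact (line_through_exchange X a b1 x (not_eq_sym xa) (line_through_sym X b1 a x Hx)). }
  assert (xy0 : x <> y0).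
  { intro E; subst y0. apply (AB b); [|exact Bb].
    apply (flat_line_through X A a x b FA Aa Ax).
    exact (line_through_exchange X a b x (not_eq_sym xa) Hy0). }
  assert (Hb1 : col x y0 b1).
  { apply line_through_sym, line_through_exchange; [exact (not_eq_sym xy0)|].
    exact (line_through_sym X b1 y0 x Hx). }
  assert (nb1 : ~ col a x b1)
    by (intro H; exact (AB b1 (flat_line_through X A a x b1 FA Aa Ax H) Bb1)).
  assert (Hay0 : forall t, col a b t -> col a y0 t)
    by (intros t; apply (line_through_eq X a b a y0 (not_eq_sym y0a) (line_through_l X a b) Hy0)).
  assert (Nb : ~ lines_meet X b b1 a x).
  { intro Hm. destruct (lines_meet_flats_meet X B A b b1 a x FB FA Bb Bb1 Aa Ax Hm)
      as [w [Bw Aw]]. exact (AB w Aw Bw). }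
  apply NNPP; intro Nz. apply zb.
  exact (proaffine_unique_nonmeeting X a x y0 b1 z b Hpa Hb1 nb1
           (Hay0 z Hz) (Hay0 b (line_through_r X a b)) Nz Nb).
Qed.

Lemma meeting_point_eq (b1 z c1 w : X) : B b1 -> col a b z -> z <> b -> z <> b1 ->
  C c1 -> col c1 z b1 -> A w -> col z b1 w -> c1 = w.
Proof.
  intros Bb1 Hz zb zb1 Cc1 Hc1 Aw Hw.
  assert (Ha : col b z a).
  { apply line_through_exchange; [exact (not_eq_sym zb)|].
    exact (line_through_sym X a b z Hz). }
  assert (na : ~ col b1 b a) by (intro H; exact (nBa (flat_line_through X B b1 b a FB Bb1 Bb H))).
  assert (Hc1' : col b1 z c1).
  { apply line_through_sym, line_through_exchange; [exact zb1|].
    exact (line_through_sym X c1 z b1 Hc1). }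
  assert (Nc : ~ lines_meet X c1 a b1 b).
  { intro Hm. destruct (lines_meet_flats_meet X C B c1 a b1 b FC FB Cc1 Ca Bb1 Bb Hm)
      as [t [Ct Bt]]. exact (BC t Bt Ct). }
  assert (Nw : ~ lines_meet X w a b1 b).
  { intro Hm. destruct (lines_meet_flats_meet X A B w a b1 b FA FB Aw Aa Bb1 Bb Hm)
      as [t [At Bt]]. exact (AB t At Bt). }
  exact (proaffine_unique_nonmeeting X b1 b z a c1 w Hpa Ha na Hc1'
           (line_through_sym X z b1 w Hw) Nc Nw).
Qed.

Lemma in_flat_of_decompositions (y0 b1 z c1 : X) :
  col a b y0 -> B b1 -> col b1 y0 x -> col a b z -> C c1 -> col c1 z b1 -> C x.
Proof.
  intros Hy0 Bb1 Hx Hz Cc1 Hc1.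
  assert (b1b : b1 <> b).
  { intro E; subst b1.
    assert (y0b : y0 <> b).
    { intro E; subst y0. apply (AB x Ax). rewrite (line_through_same X b x Hx). exact Bb. }
    apply (AB b); [|exact Bb].
    apply (flat_line_through X A a x b FA Aa Ax).
    apply line_through_exchange; [exact (not_eq_sym xa)|].
    apply line_through_sym.
    apply (line_through_eq X b a b y0 (not_eq_sym y0b) (line_through_l X b a)
             (line_through_sym X a b y0 Hy0)); exact Hx. }
  assert (zb : z <> b).
  { intro E; subst z. apply (BC c1); [|exact Cc1].
    apply (flat_line_through X B b b1 c1 FB Bb Bb1).
    exact (line_through_exchange X b c1 b1 (not_eq_sym b1b) (line_through_sym X c1 b b1 Hc1)). }
  assert (zb1 : z <> b1).
  { intro E; subst z. apply nBa, (flat_line_through X B b b1 a FB Bb Bb1).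
    exact (line_through_exchange X b a b1 (not_eq_sym b1b) (line_through_sym X a b b1 Hz)). }
  destruct (line_to_ab_meets_ax y0 b1 Hy0 Bb1 Hx z Hz zb) as [w [Hw Hwx]].
  assert (Aw : A w) by exact (flat_line_through X A a x w FA Aa Ax Hwx).
  rewrite <- (meeting_point_eq b1 z c1 w Bb1 Hz zb zb1 Cc1 Hc1 Aw Hw) in Hwx.
  destruct (classic (c1 = a)) as [->|c1a].
  - exfalso.
    assert (za : z <> a).
    { intro E; subst z. apply nBa. rewrite <- (line_through_same X a b1 Hc1). exact Bb1. }
    apply nBa, (flat_line_through X B b b1 a FB Bb Bb1).
    apply (line_through_eq X a z b b1 (not_eq_sym b1b)
             (line_through_exchange X a b z (not_eq_sym za) Hz) Hc1), line_through_l.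
  - apply (flat_line_through X C a c1 x FC Ca Cc1).
    exact (line_through_exchange X a x c1 (not_eq_sym c1a) Hwx).
Qed.

End GeneralPosition.

Lemma subparallel_subset_through_point (X : liner) (A B C : X -> Prop) (a : X) :
  proaffine X -> regular X -> flat X A -> flat X B -> flat X C ->
  subparallel X A B -> subparallel X B C -> A a -> C a -> subset X A C.
Proof.
  intros Hpa Hreg FA FB FC SAB SBC Aa Ca x Ax.
  destruct (classic (B a)) as [Ba|nBa].
  { exact (subparallel_subset X B C a FC SBC Ba Ca x (subparallel_subset X A B a FB SAB Aa Ba x Ax)). }
  destruct (classic (exists t, B t /\ C t)) as [[t [Bt Ct]]|nBC].
  { apply (hull_min X (fun s => s = a \/ B s) C FC); [|exact (SAB a Aa x Ax)].
    intros s [->|Bs]; [exact Ca|exact (subparallel_subset X B C t FC SBC Bt Ct s Bs)]. }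
  destruct (classic (exists b, B b)) as [[b Bb]|nB].
  2:{ replace x with a; [exact Ca|].
      symmetry; apply (hull_min X (fun s => s = a \/ B s) _ (flat_point X a)); [|exact (SAB a Aa x Ax)].
      intros s [->|Bs]; [reflexivity|exfalso; eauto]. }
  destruct (classic (x = a)) as [->|xa]; [exact Ca|].
  assert (AB : forall t, A t -> B t -> False)
    by (intros t At Bt; exact (nBa (subparallel_subset X A B t FB SAB At Bt a Aa))).
  assert (BC : forall t, B t -> C t -> False) by (intros t Bt Ct; eauto).
  assert (nCb : ~ C b) by (intro Cb; eauto).
  destruct (regular_hull_add_point X B b a x Hreg FB Bb nBa (SAB a Aa x Ax))
    as [y0 [b1 [Hy0 [Bb1 Hx]]]].
  destruct (regular_hull_add_point X C a b b1 Hreg FC Ca nCb (SBC b Bb b1 Bb1))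
    as [z [c1 [Hz [Cc1 Hc1]]]].
  exact (in_flat_of_decompositions X A B C a b x Hpa FA FB FC Aa Ca Bb Ax xa nBa AB BC
           y0 b1 z c1 (line_through_sym X b a y0 Hy0) Bb1 Hx Hz Cc1 Hc1).
Qed.

Lemma subparallel_trans (X : liner) (A B C : X -> Prop) :
  proaffine X -> regular X -> flat X A -> flat X B -> flat X C ->
  subparallel X A B -> subparallel X B C -> subparallel X A C.
Proof.
  intros Hpa Hreg FA FB FC SAB SBC a Aa.
  apply (subparallel_subset_through_point X A B _ a Hpa Hreg FA FB (flat_hull X _) SAB).
  - intros b Bb t Bt. apply (hull_mono X (fun s => s = b \/ C s)); [|exact (SBC b Bb t Bt)].
    intros s [->|Cs]; [left; reflexivity|right; apply subset_hull; right; exact Cs].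
  - exact Aa.
  - apply subset_hull; left; reflexivity.
Qed.

Theorem theorem6p5p4 (X : liner) (A B C : X -> Prop) :
  proaffine X -> regular X -> flat X A -> flat X B -> flat X C ->
  (subparallel X A B -> subparallel X B C -> subparallel X A C) /\
  (parallel X A B -> parallel X B C -> parallel X A C).
Proof.
  intros Hpa Hreg FA FB FC. split.
  - exact (subparallel_trans X A B C Hpa Hreg FA FB FC).
  - intros [SAB SBA] [SBC SCB]; split.
    + exact (subparallel_trans X A B C Hpa Hreg FA FB FC SAB SBC).
    + exact (subparallel_trans X C B A Hpa Hreg FC FB FA SCB SBA).
Qed.
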